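(* For any $\alpha>0$ there exists $\beta>0$ such that the following holds. Let $\Lambda_1,\dots,\Lambda_m\subseteq\mathbb{R}^d$ be hyperplanes with $b\in\bigcap_{i\in[m]}\Lambda_i$, and let $j$ be the lowest dimension for which the set $V=\{v_1,\dots,v_m\}$ of their unit normal vectors is $(j,\beta^j)$-flat with respect to a $j$-plane $\Lambda_B$ with $b\in\Lambda_B$. Let $S\subseteq\mathbb{R}^d$ and $p\in S$. If $S$ is $(p,d-1,\beta^d)$-flat with respect to $\Lambda_i$ for every $i\in[m]$, then $S$ is $(p,d-j,\alpha)$-flat with respect to $\Lambda:=\Lambda_B(b)^{\perp}$.
   Context: A $j$-plane is an affine subspace of dimension $j$. The angle between a vector $v$ and a plane $\Lambda$ is the infimum of the angles between $v$ and vectors $w\in\Lambda-\Lambda$. A set of vectors $V$ is $(j,\alpha)$-flat with respect to a $j$-plane $\Lambda$ if every $v\in V$ makes angle at most $\alpha$ with $\Lambda$. A set $S$ is $(p,j,\alpha)$-flat with respect to a $j$-plane $\Lambda$ (for $p\in S$) if $\{p-q:q\in S\}$ is $(j,\alpha)$-flat with respect to $\Lambda$. For a $j$-plane $\gamma\subseteq\mathbb{R}^d$ and $p\in\gamma$, $\gamma(p)^{\perp}$ is the $(d-j)$-plane through $p$ orthogonal to $\gamma$. *)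

From HB Require Import structures.
From mathcomp Require Import all_boot all_order all_algebra.
From mathcomp Require Import all_classical all_reals.
From mathcomp Require Import ereal trigo.
Set Implicit Arguments. Unset Strict Implicit. Unset Printing Implicit Defensive.
Import Order.TTheory GRing.Theory Num.Theory.
Local Open Scope classical_set_scope.
Local Open Scope ring_scope.

Section Defs.
Variables (R : realType) (d : nat).
Notation vec := 'rV[R]_d.

Definition dotp (u v : vec) : R := (u *m v^T) 0 0.
Definition enorm (u : vec) : R := Num.sqrt (dotp u u).

Definition vangle (u w : vec) : R := acos (dotp u w / (enorm u * enorm w)).

Definition is_plane (j : nat) (L : set vec) : Prop :=
  exists (a : vec) (U : 'M[R]_d), \rank U = j /\ L = [set x | (x - a <= U)%MS].

Definition diffset (L : set vec) : set vec :=
  [set x - y | x in L & y in L].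

(* angle between v and the plane L: infimum of angles between v and the
   nonzero w in L - L (infimum of an empty set is +oo) *)
Definition angle_plane (v : vec) (L : set vec) : \bar R :=
  ereal_inf [set (vangle v w)%:E | w in diffset L `\ 0].

(* V is (j,alpha)-flat w.r.t. the j-plane L; the zero vector makes angle 0
   with everything (convention) *)
Definition vflat (j : nat) (alpha : R) (V : set vec) (L : set vec) : Prop :=
  is_plane j L /\ forall v, V v -> v = 0 \/ (angle_plane v L <= alpha%:E)%E.

Definition sflat (p : vec) (j : nat) (alpha : R) (S : set vec) (L : set vec)
  : Prop := vflat j alpha [set p - q | q in S] L.

Definition perp_plane (L : set vec) (p : vec) : set vec :=
  [set x | forall w, diffset L w -> dotp (x - p) w = 0].

End Defs.

From HB Require Import structures.
From mathcomp Require Import all_boot all_order all_algebra.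
From mathcomp Require Import all_classical all_reals.
From mathcomp Require Import ereal trigo normedtype derive.
From mathcomp Require Import ring lra zify.
Set Implicit Arguments. Unset Strict Implicit. Unset Printing Implicit Defensive.
Import Order.TTheory GRing.Theory Num.Theory numFieldNormedType.Exports.
Local Open Scope classical_set_scope.
Local Open Scope ring_scope.

(* Write z = p - q (q in S) as y + (z - y) with y in the direction space U of
   Lambda_B and z - y orthogonal to U, i.e. in the direction space of Lambda; the
   angle between z and Lambda is then controlled by |y| / |z|.  If y <> 0, the
   (j-1)-plane through b with direction space U /\ y^perp is not flat enough for V,
   by minimality of j, so some normal v_i makes an angle > beta^(j-1) with it.  As
   v_i is within beta^j of U, its projection v_U onto U has a component of size
   >~ beta^(j-1) along y.  Now <z, v_i> = <y, v_U> + <z - y, v_i - v_U>, where the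
   left side is at most beta^d |z| (S is flat w.r.t. Lambda_i) and the last term is
   at most beta^j |z|; hence beta^(j-1) |y| <~ beta^j |z|, i.e. |y| <~ beta |z|. *)

Section Trigonometry.
Variable R : realType.
Implicit Types x t : R.

Lemma sin_eq_cos_mul x : 0 <= x -> exists2 c, 0 <= c <= x & sin x = cos c * x.
Proof.
move=> x0; have [|c] := @MVT_segment R sin cos 0 x x0.
  exact/continuous_subspaceT/continuous_sin.
by rewrite in_itv sin0 !subr0 => cI ->; exists c.
Qed.

Lemma sin_sqr_le x : 0 <= x -> sin x ^+ 2 <= x ^+ 2.
Proof.
move=> x0; have [c _ ->] := sin_eq_cos_mul x0.
by rewrite exprMn ler_piMl ?sqr_ge0 // -sqr_normr expr_le1 ?cos_max.
Qed.

Lemma sin_ge_half x : 0 <= x <= 1 -> x / 2 <= sin x.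
Proof.
move=> /andP[x0 x1]; have [c /andP[c0 cx] ->] := sin_eq_cos_mul x0.
have cc : cos c = 1 - 2 * sin (c / 2) ^+ 2.
  have -> : cos c = cos ((c / 2) *+ 2) by rewrite mulr2n -splitr.
  by rewrite cos_mulr2n cos2sin2 mulr2n; lra.
have := sin_sqr_le (divr_ge0 c0 (ler0n R 2)).
have : c ^+ 2 <= 1 by rewrite expr_le1 //; lra.
rewrite expr_div_n; nra.
Qed.

Lemma sin_sqr_ge x : 0 <= x <= 1 -> x ^+ 2 / 4 <= sin x ^+ 2.
Proof.
move=> x01; have h := sin_ge_half x01.
have -> : x ^+ 2 / 4 = (x / 2) ^+ 2 by rewrite expr_div_n -natrX.
by rewrite ler_sqr ?nnegrE //; move: x01 h => /andP[]; lra.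
Qed.

Lemma acos_le q t : -1 <= q <= 1 -> 0 <= t <= pi -> (acos q <= t) = (cos t <= q).
Proof.
move=> hq ht; rewrite -{2}(acosK hq) ?in_itv //= !leNgt.
by rewrite ltr_cos // in_itv //= acos_ge0 // acos_lepi.
Qed.

End Trigonometry.

Section InnerProduct.
Variables (R : realType) (d : nat).
Notation vec := 'rV[R]_d.
Implicit Types u v w y z : vec.

Lemma dotpE u v : dotp u v = \sum_i u 0 i * v 0 i.
Proof. by rewrite /dotp mxE; apply: eq_bigr => i _; rewrite mxE. Qed.

Lemma dotpC u v : dotp u v = dotp v u.
Proof. by rewrite !dotpE; apply: eq_bigr => i _; rewrite mulrC. Qed.

Lemma dotpDl u w v : dotp (u + w) v = dotp u v + dotp w v.
Proof. by rewrite /dotp mulmxDl mxE. Qed.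

Lemma dotpZl a u v : dotp (a *: u) v = a * dotp u v.
Proof. by rewrite /dotp -scalemxAl mxE. Qed.

Lemma dotpBl u w v : dotp (u - w) v = dotp u v - dotp w v.
Proof. by rewrite dotpDl -scaleN1r dotpZl mulN1r. Qed.

Lemma dotpDr u w v : dotp v (u + w) = dotp v u + dotp v w.
Proof. by rewrite dotpC dotpDl !(dotpC v). Qed.

Lemma dotpZr a u v : dotp v (a *: u) = a * dotp v u.
Proof. by rewrite dotpC dotpZl dotpC. Qed.

Lemma dotpBr u w v : dotp v (u - w) = dotp v u - dotp v w.
Proof. by rewrite dotpC dotpBl !(dotpC v). Qed.

Lemma dotp0l v : dotp 0 v = 0.
Proof. by rewrite -(scale0r 0) dotpZl mul0r. Qed.

Lemma dotp0r v : dotp v 0 = 0.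
Proof. by rewrite dotpC dotp0l. Qed.

Lemma dotpp_ge0 u : 0 <= dotp u u.
Proof. by rewrite dotpE; apply: sumr_ge0 => i _; rewrite -expr2 sqr_ge0. Qed.

Lemma dotpp_eq0 u : (dotp u u == 0) = (u == 0).
Proof.
apply/eqP/eqP => [|->]; last exact: dotp0l.
rewrite dotpE => /psumr_eq0P u0; apply/rowP => i; rewrite mxE.
by apply/eqP; rewrite -sqrf_eq0 expr2 u0 // => k _; rewrite -expr2 sqr_ge0.
Qed.

Lemma dotpp_gt0 u : (0 < dotp u u) = (u != 0).
Proof. by rewrite lt_def dotpp_ge0 dotpp_eq0 andbT. Qed.

Lemma dotpp_orth_split y z : dotp y (z - y) = 0 ->
  dotp z z = dotp y y + dotp (z - y) (z - y).
Proof.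
move=> yz; have ez : z = y + (z - y) by rewrite subrKC.
by rewrite {1 2}ez dotpDl !(dotpDr y (z - y)) (dotpC (z - y) y) yz addr0 add0r.
Qed.

Lemma enorm_ge0 u : 0 <= enorm u.
Proof. exact: sqrtr_ge0. Qed.

Lemma enorm_gt0 u : (0 < enorm u) = (u != 0).
Proof. by rewrite sqrtr_gt0 dotpp_gt0. Qed.

Lemma enorm_sqr u : enorm u ^+ 2 = dotp u u.
Proof. by rewrite sqr_sqrtr // dotpp_ge0. Qed.

Lemma dotp_sqr_le u w : dotp u w ^+ 2 <= dotp u u * dotp w w.
Proof.
have [->|w0] := eqVneq w 0; first by rewrite dotp0r dotp0l expr0n mulr0.
have ww0 : 0 < dotp w w by rewrite dotpp_gt0.
have := dotpp_ge0 (dotp w w *: u - dotp u w *: w).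
rewrite !(dotpBl, dotpBr, dotpZl, dotpZr) (dotpC w u) => h.
by rewrite -subr_ge0 -(pmulr_rge0 _ ww0); nra.
Qed.

Lemma dotp_le u w : `|dotp u w| <= enorm u * enorm w.
Proof.
rewrite -sqrtrM ?dotpp_ge0 // -sqrtr_sqr ler_sqrt ?dotp_sqr_le //.
by rewrite mulr_ge0 ?dotpp_ge0.
Qed.

Lemma dotp_div_norm_in u w : u != 0 -> w != 0 ->
  -1 <= dotp u w / (enorm u * enorm w) <= 1.
Proof.
move=> u0 w0; have uw0 : 0 < enorm u * enorm w by rewrite mulr_gt0 ?enorm_gt0.
have := dotp_le u w; rewrite ler_norml => /andP[h1 h2].
by rewrite ler_pdivlMr // ler_pdivrMr // mulN1r mul1r h1 h2.
Qed.

End InnerProduct.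

Section Subspaces.
Variables (R : realType) (d : nat).
Notation vec := 'rV[R]_d.
Implicit Types u v w x y z : vec.

Lemma dotp_kermx_tr {m} {U : 'M[R]_(m, d)} {y w} :
  (y <= kermx U^T)%MS -> (w <= U)%MS -> dotp y w = 0.
Proof.
move=> /sub_kermxP yU /submxP[k ->].
by rewrite /dotp trmx_mul mulmxA yU mul0mx mxE.
Qed.

Lemma sub_kermx_trP m (U : 'M[R]_(m, d)) y :
  (y <= kermx U^T)%MS <-> forall w, (w <= U)%MS -> dotp y w = 0.
Proof.
split=> [yU w|yU]; first exact: dotp_kermx_tr.
apply/sub_kermxP/matrixP => i k; rewrite ord1 [RHS]mxE.
by rewrite -(yU _ (row_sub k U)) /dotp !mxE; apply: eq_bigr => l _; rewrite !mxE.
Qed.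

Lemma sub_kermx_tr_rV x y : (y <= kermx x^T)%MS <-> dotp y x = 0.
Proof.
split=> [/sub_kermx_trP/(_ x (submx_refl x)) //|yx].
apply/sub_kermx_trP => w /submxP[k ->].
by rewrite [k]mx11_scalar mul_scalar_mx dotpZr yx mulr0.
Qed.

Lemma orth_decomp m (U : 'M[R]_(m, d)) y :
  exists2 yU, (yU <= U)%MS & (y - yU <= kermx U^T)%MS.
Proof.
set K := kermx U^T.
have capUK : (U :&: K)%MS == 0.
  apply/rowV0P => x; rewrite sub_capmx => /andP[xU xK].
  by apply/eqP; rewrite -dotpp_eq0 (dotp_kermx_tr xK xU).
have : row_full (U + K)%MS.
  have := mxrank_sum_cap U K; rewrite (eqP capUK) mxrank0 addn0.
  by rewrite /row_full mxrank_ker mxrank_tr subnKC ?rank_leq_col // => ->.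
move/(submx_full y)/sub_addsmxP => [[yU yK] /= ->].
by exists (yU *m U); rewrite ?submxMl // addrC addKr submxMl.
Qed.

Lemma mxrank_cap_kermx_tr m (U : 'M[R]_(m, d)) x : (x <= U)%MS -> x != 0 ->
  \rank (U :&: kermx x^T)%MS = (\rank U).-1.
Proof.
move=> xU x0; set K := kermx x^T.
have U1 : (U + K :=: 1%:M)%MS.
  apply/eqmxP; rewrite submx1 /=; apply/row_subP => i; set y := row i 1%:M.
  set c := dotp y x / dotp x x.
  rewrite -(subrK (c *: x) y) addrC addmx_sub_adds ?scalemx_sub //.
  apply/sub_kermx_tr_rV; rewrite dotpBl dotpZl /c.
  by rewrite divfK ?subrr ?dotpp_eq0.
have := mxrank_sum_cap U K; rewrite U1 mxrank1 mxrank_ker mxrank_tr.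
have := mxrankS xU; have := rank_leq_col U; rewrite rank_rV x0; lia.
Qed.

End Subspaces.

Section Angles.
Variables (R : realType) (d : nat).
Notation vec := 'rV[R]_d.
Implicit Types (a b u v w x y z e f : vec) (L : set vec).

Definition affine_plane m a (U : 'M[R]_(m, d)) : set vec := [set x | (x - a <= U)%MS].

Lemma diffset_affine m a (U : 'M[R]_(m, d)) w :
  diffset (affine_plane a U) w <-> (w <= U)%MS.
Proof.
rewrite /affine_plane; split=> [[x /= xU [y /= yU <-]]|wU].
  by rewrite -(subrKA a) addmx_sub // -opprB -scaleN1r scalemx_sub.
exists (a + w); first by rewrite /= addrC addKr.
by exists a; rewrite /= ?subrr ?sub0mx // addrC addKr.
Qed.

Lemma perp_plane_affine m a (U : 'M[R]_(m, d)) b :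
  perp_plane (affine_plane a U) b = affine_plane b (kermx U^T).
Proof.
apply/seteqP; split=> x; rewrite /affine_plane /= => xb.
  by apply/sub_kermx_trP => w wU; apply/xb/diffset_affine.
by move=> w /diffset_affine; apply: dotp_kermx_tr.
Qed.

Lemma cos_mul_norm_le_of_angle_plane L z e t : 0 <= t <= pi ->
  (forall w, diffset L w -> dotp (z - e) w = 0) ->
  (angle_plane z L <= t%:E)%E -> cos t * enorm z <= enorm e.
Proof.
move=> t0pi ze zLt; have [->|z0] := eqVneq z 0.
  by rewrite /enorm dotp0l sqrtr0 mulr0 enorm_ge0.
have [ez|/ltW ez] := leP (enorm e) (enorm z); last first.
  by apply: le_trans ez; rewrite ler_piMl ?enorm_ge0 ?cos_le1.
have zpos : 0 < enorm z by rewrite enorm_gt0.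
have q01 : -1 <= enorm e / enorm z <= 1.
  rewrite ler_pdivrMr // mul1r ez andbT.
  by rewrite (le_trans _ (divr_ge0 (enorm_ge0 e) (ltW zpos))) ?lerN10.
rewrite -ler_pdivlMr // -acos_le // -lee_fin (le_trans _ zLt) //.
apply: le_ereal_inf_tmp => _ [w [Lw /eqP w0] <-]; rewrite lee_fin /vangle.
have r01 := dotp_div_norm_in z0 w0.
rewrite acos_le ?acosK ?in_itv //= ?acos_ge0 ?acos_lepi //.
have wpos : 0 < enorm w by rewrite enorm_gt0.
rewrite ler_pdivrMr ?mulr_gt0 // mulrA divfK ?gt_eqF //.
have := ze w Lw; rewrite dotpBl => /eqP; rewrite subr_eq0 => /eqP ->.
exact: le_trans (ler_norm _) (dotp_le e w).
Qed.

Lemma angle_plane_le_of_cos_mul_norm L z e t : 0 <= t <= pi ->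
  diffset L e -> e != 0 -> dotp (z - e) e = 0 ->
  cos t * enorm z <= enorm e -> (angle_plane z L <= t%:E)%E.
Proof.
move=> t0pi Le e0 ze hle.
have epos : 0 < enorm e by rewrite enorm_gt0.
have zee : dotp z e = enorm e ^+ 2.
  by apply/eqP; rewrite enorm_sqr -subr_eq0 -dotpBl ze.
have z0 : z != 0.
  by apply: contraPneq zee => -> /eqP; rewrite dotp0l eq_sym sqrf_eq0 gt_eqF.
have zpos : 0 < enorm z by rewrite enorm_gt0.
apply: le_trans (ereal_inf_lbound _) _.
  by exists e => //; split => //; apply/eqP.
rewrite lee_fin /vangle acos_le ?dotp_div_norm_in //.
by rewrite zee expr2 -mulf_div divff ?gt_eqF // mulr1 ler_pdivlMr.
Qed.

Lemma cos_mul_norm_le_of_sqr z e (x : R) : 0 <= x <= 1 ->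
  (1 - x ^+ 2 / 4) * dotp z z <= dotp e e -> cos x * enorm z <= enorm e.
Proof.
move=> x01 ze.
have c2 : cos x ^+ 2 <= 1 - x ^+ 2 / 4 by rewrite cos2sin2 lerD2l lerN2 sin_sqr_ge.
have : (cos x * enorm z) ^+ 2 <= enorm e ^+ 2.
  by rewrite exprMn !enorm_sqr (le_trans _ ze) // ler_wpM2r ?dotpp_ge0.
have := enorm_ge0 e; nra.
Qed.

Lemma sqr_orth_le_of_angle_plane L e f t : 0 <= t <= pi / 2 ->
  (forall w, diffset L w -> dotp f w = 0) -> dotp e f = 0 ->
  (angle_plane (e + f) L <= t%:E)%E -> dotp f f <= t ^+ 2 * dotp (e + f) (e + f).
Proof.
move=> /andP[t0 tpi] fL ef efLt.
have pi0 := pi_ge0 R.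
have ct0 : 0 <= cos t by rewrite cos_ge0_pihalf // tpi andbT (le_trans _ t0); lra.
have tpi' : 0 <= t <= pi by rewrite t0 (le_trans tpi) //; lra.
have := cos_mul_norm_le_of_angle_plane (e := e) tpi' _ efLt.
rewrite addrC addKr => /(_ fL) hcos.
have hsq : cos t ^+ 2 * dotp (e + f) (e + f) <= dotp e e.
  by rewrite -!enorm_sqr -exprMn ler_sqr ?nnegrE ?mulr_ge0 ?enorm_ge0.
have := sin_sqr_le t0; have := cos2sin2 t.
rewrite !(dotpDl, dotpDr) (dotpC f e) ef in hsq *; have := dotpp_ge0 (e + f).
rewrite !(dotpDl, dotpDr) (dotpC f e) ef; nra.
Qed.

Lemma sqr_orth_le_of_angle_affine m a (U : 'M[R]_(m, d)) v vU t :
  0 <= t <= pi / 2 -> (vU <= U)%MS -> (v - vU <= kermx U^T)%MS ->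
  (angle_plane v (affine_plane a U) <= t%:E)%E ->
  dotp (v - vU) (v - vU) <= t ^+ 2 * dotp v v.
Proof.
move=> t0pi vU_U vP vUt; rewrite -{3 4}(subrKC vU v).
apply: (@sqr_orth_le_of_angle_plane (affine_plane a U)); rewrite ?subrKC //.
- by move=> w /diffset_affine; apply: dotp_kermx_tr.
- by rewrite dotpC (dotp_kermx_tr vP vU_U).
Qed.

Lemma dotp_normal_sqr_le L v z t : 0 <= t <= pi / 2 -> dotp v v = 1 ->
  (forall w, diffset L w -> dotp v w = 0) ->
  (angle_plane z L <= t%:E)%E -> dotp z v ^+ 2 <= t ^+ 2 * dotp z z.
Proof.
move=> t0pi v1 vL zLt; set c := dotp z v.
suff : dotp (c *: v) (c *: v) <= t ^+ 2 * dotp z z.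
  by rewrite dotpZl dotpZr v1 mulr1 -expr2.
rewrite -(subrK (c *: v) z).
apply: (@sqr_orth_le_of_angle_plane L); rewrite ?subrK //.
  by move=> w Lw; rewrite dotpZl (vL w Lw) mulr0.
by rewrite dotpZr dotpBl dotpZl v1 mulr1 subrr mulr0.
Qed.

Lemma angle_plane_le_of_sqr_proj_le m b (K : 'M[R]_(m, d)) z y (x : R) :
  0 < x <= 1 -> (z - y <= K)%MS -> dotp y (z - y) = 0 ->
  dotp y y <= x ^+ 2 / 4 * dotp z z -> z != 0 ->
  (angle_plane z (affine_plane b K) <= x%:E)%E.
Proof.
move=> /andP[x0 x1] zK yz ysmall z0.
have hsq : (1 - x ^+ 2 / 4) * dotp z z <= dotp (z - y) (z - y).
  by move: ysmall; rewrite (dotpp_orth_split yz); have := dotpp_ge0 y; nra.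
have zy0 : z - y != 0.
  by rewrite -dotpp_gt0 (lt_le_trans _ hsq) // mulr_gt0 ?dotpp_gt0 //; nra.
have x01 : 0 <= x <= 1 by rewrite ltW.
apply: angle_plane_le_of_cos_mul_norm zy0 _ (cos_mul_norm_le_of_sqr x01 hsq).
- by rewrite ltW //= (le_trans x1) // (le_trans _ (pi_ge2 R)) ?ler1n.
- exact/diffset_affine.
- by rewrite subKr.
Qed.

End Angles.

Section Tilt.
Variables (R : realType) (d : nat).
Notation vec := 'rV[R]_d.
Implicit Types (b u v w x y z : vec).

Lemma dotp_sqr_ge_of_angle_cap_gt m (U : 'M[R]_(m, d)) b y v vU (t : R) :
  (y <= U)%MS -> (vU <= U)%MS -> (v - vU <= kermx U^T)%MS -> 0 <= t <= pi ->
  ~ (angle_plane v (affine_plane b (U :&: kermx y^T)%MS) <= t%:E)%E ->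
  (dotp vU vU - cos t ^+ 2 * dotp v v) * dotp y y <= dotp vU y ^+ 2.
Proof.
move=> yU vU_U vP t0pi vfar.
have [->|y0] := eqVneq y 0; first by rewrite dotp0l mulr0 sqr_ge0.
have ypos : 0 < dotp y y by rewrite dotpp_gt0.
set c := dotp vU y / dotp y y; set w := vU - c *: y.
have wy : dotp w y = 0 by rewrite dotpBl dotpZl /c divfK ?subrr ?gt_eqF.
have wU : (w <= U)%MS by rewrite addmx_sub // -scaleN1r !scalemx_sub.
(* w lies in the cap and v - w is orthogonal to w, so v far from the cap
   forces w to be short. *)
have hw : dotp w w <= cos t ^+ 2 * dotp v v.
  have [->|w0] := eqVneq w 0; first by rewrite dotp0l mulr_ge0 ?sqr_ge0 ?dotpp_ge0.
  suff : enorm w < cos t * enorm v.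
    by rewrite -!enorm_sqr -exprMn; have := enorm_ge0 w; nra.
  rewrite ltNge; apply/negP => wv; apply: vfar.
  apply: angle_plane_le_of_cos_mul_norm t0pi _ w0 _ wv.
    by apply/diffset_affine; rewrite sub_capmx wU; apply/sub_kermx_tr_rV.
  have -> : v - w = (v - vU) + c *: y by rewrite /w opprB addrCA addrC.
  by rewrite dotpDl dotpZl (dotp_kermx_tr vP wU) dotpC wy mulr0 addr0.
have hvU : dotp vU vU = c ^+ 2 * dotp y y + dotp w w.
  rewrite (dotpp_orth_split (y := c *: y)) -/w; last by rewrite dotpZl dotpC wy mulr0.
  by rewrite dotpZl dotpZr mulrA expr2.
have -> : dotp vU y = c * dotp y y by rewrite /c divfK ?gt_eqF.
by rewrite hvU; nra.
Qed.

Lemma sqr_proj_le_of_tilt m (U : 'M[R]_(m, d)) b z y v vU (beta t : R) :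
  beta ^+ 2 <= 8^-1 -> 0 < t <= 1 ->
  (y <= U)%MS -> (z - y <= kermx U^T)%MS ->
  (vU <= U)%MS -> (v - vU <= kermx U^T)%MS -> dotp v v = 1 ->
  dotp z v ^+ 2 <= (beta * t) ^+ 2 * dotp z z ->
  dotp (v - vU) (v - vU) <= (beta * t) ^+ 2 ->
  ~ (angle_plane v (affine_plane b (U :&: kermx y^T)%MS) <= t%:E)%E ->
  dotp y y <= 32 * beta ^+ 2 * dotp z z.
Proof.
move=> beta8 /andP[t0 t1] yU zP vU_U vP v1 zv vPsmall vfar.
have t0pi : 0 <= t <= pi.
  by rewrite ltW //= (le_trans t1) // (le_trans _ (pi_ge2 R)) ?ler1n.
have far := dotp_sqr_ge_of_angle_cap_gt yU vU_U vP t0pi vfar.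
have hv : dotp v v = dotp vU vU + dotp (v - vU) (v - vU).
  by apply: dotpp_orth_split; rewrite dotpC (dotp_kermx_tr vP vU_U).
have hz : dotp z z = dotp y y + dotp (z - y) (z - y).
  by apply: dotpp_orth_split; rewrite dotpC (dotp_kermx_tr zP yU).
have hzv : dotp z v = dotp vU y + dotp (z - y) (v - vU).
  have ez : y + (z - y) = z by rewrite subrKC.
  have ev : vU + (v - vU) = v by rewrite subrKC.
  rewrite -{1}ez -{1}ev dotpDl !(dotpDr vU (v - vU)) (dotpC y vU) (dotpC y (v - vU)).
  by rewrite (dotp_kermx_tr vP yU) (dotp_kermx_tr zP vU_U) addr0 add0r.
have t01 : 0 <= t <= 1 by rewrite ltW.
set X := dotp y y in hz far *; set N := dotp z z in zv hz *.
set D := dotp vU y in hzv far *; set e := dotp (z - y) (v - vU) in hzv.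
set T := (beta * t) ^+ 2 in zv vPsmall.
have low : t ^+ 2 / 8 * X <= D ^+ 2.
  apply: le_trans far; rewrite ler_wpM2r ?dotpp_ge0 // v1 mulr1.
  have := sin_sqr_ge t01; have := cos2sin2 t.
  have := sqr_ge0 t; rewrite /T exprMn in vPsmall; nra.
have e2 : e ^+ 2 <= T * N.
  apply: le_trans (dotp_sqr_le _ _) _; rewrite mulrC ler_pM ?dotpp_ge0 //.
  by rewrite hz lerDr dotpp_ge0.
have up : D ^+ 2 <= 4 * T * N.
  have := sqr_ge0 (D + 2 * e); rewrite hzv in zv; nra.
have tpos : 0 < t ^+ 2 by rewrite exprn_gt0.
rewrite -(ler_pM2l tpos); have := le_trans low up; rewrite /T exprMn; nra.
Qed.

Lemma exists_far_of_not_vflat m j (alpha : R) (v : 'I_m -> vec) L :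
  is_plane j L -> ~ vflat j alpha (range v) L ->
  exists i, ~ (angle_plane (v i) L <= alpha%:E)%E.
Proof.
move=> jL nflat; apply/existsNP => vclose; apply: nflat; split=> // _ [i _ <-].
by right; apply: vclose.
Qed.

Lemma sqr_proj_le_of_flat m (beta : R) (Lam : 'I_m -> set vec) (v : 'I_m -> vec)
    (U : 'M[R]_d) (a b z y : vec) :
  0 < beta -> beta ^+ 2 <= 8^-1 ->
  (forall i, enorm (v i) = 1) ->
  (forall i w, diffset (Lam i) w -> dotp (v i) w = 0) ->
  vflat (\rank U) (beta ^+ \rank U) (range v) (affine_plane a U) ->
  (forall j L, (j < \rank U)%N -> L b -> ~ vflat j (beta ^+ j) (range v) L) ->
  (forall i, (angle_plane z (Lam i) <= (beta ^+ d)%:E)%E) ->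
  (y <= U)%MS -> (z - y <= kermx U^T)%MS ->
  dotp y y <= 32 * beta ^+ 2 * dotp z z.
Proof.
move=> beta0 beta8 vn vLam [_ vU] hmin zLam yU zP.
have [->|y0] := eqVneq y 0.
  by rewrite dotp0l; have := dotpp_ge0 z; have := sqr_ge0 beta; nra.
have j0 : (0 < \rank U)%N by have := mxrankS yU; rewrite rank_rV y0.
have beta1 : beta <= 1 by nra.
have beta_pow_le_pihalf k : 0 <= beta ^+ k <= pi / 2.
  rewrite exprn_ge0 ?(ltW beta0) //=.
  exact: le_trans (exprn_ile1 _ (ltW beta0) beta1) (pihalf_ge1 R).
set L := affine_plane b (U :&: kermx y^T)%MS.
have Lplane : is_plane (\rank U).-1 L.
  by exists b, (U :&: kermx y^T)%MS; rewrite mxrank_cap_kermx_tr.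
have Lb : L b by rewrite /L /affine_plane /= subrr sub0mx.
have jlt : ((\rank U).-1 < \rank U)%N by rewrite ltn_predL.
have [i vfar] := exists_far_of_not_vflat Lplane (hmin _ _ jlt Lb).
have v1 : dotp (v i) (v i) = 1 by rewrite -enorm_sqr vn expr1n.
have [vUi vUiU vP] := orth_decomp U (v i).
have betaE : beta ^+ \rank U = beta * beta ^+ (\rank U).-1 by rewrite -exprS prednK.
apply: (sqr_proj_le_of_tilt beta8 _ yU zP vUiU vP v1 _ _ vfar).
- by rewrite exprn_gt0 //= exprn_ile1 // (ltW beta0).
- have := dotp_normal_sqr_le (beta_pow_le_pihalf d) v1 (vLam i) (zLam i).
  move/le_trans; apply; rewrite -betaE.
  rewrite ler_wpM2r ?dotpp_ge0 // ler_sqr ?nnegrE ?exprn_ge0 ?(ltW beta0) //.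
  by apply: ler_wiXn2l; rewrite ?(ltW beta0) ?rank_leq_col.
- have [/eqP|vclose] := vU (v i) (imageT _ _); first by rewrite -dotpp_eq0 v1 oner_eq0.
  rewrite -betaE -[X in _ <= X]mulr1 -v1.
  exact: sqr_orth_le_of_angle_affine (beta_pow_le_pihalf _) vUiU vP vclose.
Qed.

End Tilt.

Theorem corollary1 (R : realType) (alpha : R) (halpha : 0 < alpha) :
  exists2 beta : R, 0 < beta &
  forall (d m : nat) (Lam : 'I_m -> set 'rV[R]_d) (b : 'rV[R]_d)
         (v : 'I_m -> 'rV[R]_d) (j : nat) (LamB : set 'rV[R]_d)
         (S : set 'rV[R]_d) (p : 'rV[R]_d),
    (0 < d)%N ->
    (forall i, is_plane d.-1 (Lam i)) ->
    (forall i, Lam i b) ->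
    (* v i is a unit normal vector of Lam i *)
    (forall i, enorm (v i) = 1) ->
    (forall i w, diffset (Lam i) w -> dotp (v i) w = 0) ->
    (* j is the lowest dimension for which V is (j, beta^j)-flat w.r.t. a
       j-plane through b, and LamB is such a j-plane *)
    vflat j (beta ^+ j) (range v) LamB -> LamB b ->
    (forall (j' : nat) (L : set 'rV[R]_d), (j' < j)%N -> L b ->
       ~ vflat j' (beta ^+ j') (range v) L) ->
    S p ->
    (forall i, sflat p d.-1 (beta ^+ d) S (Lam i)) ->
    sflat p (d - j) alpha S (perp_plane LamB b).
Proof.
have [a' a'01 a'alpha] : exists2 a' : R, 0 < a' <= 1 & a' <= alpha.
  by exists (Num.min alpha 1); rewrite ?ge_min ?lexx // lt_min halpha ltr01 orbT.
have a'0 : 0 < a' by case/andP: a'01.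
set beta := a' / 12; have beta0 : 0 < beta by rewrite divr_gt0.
have beta_sqr : beta ^+ 2 = a' ^+ 2 / 144 by rewrite /beta; field.
exists beta => // d m Lam b v j LamB S p _ _ _ vn vLam hflat _ hmin _ hS.
case: (hflat) => -[a [U [rU LamBE]]] _; subst j LamB.
rewrite perp_plane_affine; split.
  by exists b, (kermx U^T); rewrite mxrank_ker mxrank_tr.
move=> _ [q Sq <-]; set z := p - q.
have [->|z0] := eqVneq z 0; [by left | right].
have zLam i : (angle_plane z (Lam i) <= (beta ^+ d)%:E)%E.
  by have [/eqP|//] := (hS i).2 z (ex_intro2 _ _ q Sq erefl); rewrite (negbTE z0).
have [y yU zP] := orth_decomp U z.
apply: (@le_trans _ _ a'%:E); last by rewrite lee_fin.
have yzP : dotp y (z - y) = 0 by rewrite dotpC (dotp_kermx_tr zP yU).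
apply: (angle_plane_le_of_sqr_proj_le _ a'01 zP yzP _ z0).
(* beta = a' / 12 makes the bound 32 beta^2 of sqr_proj_le_of_flat at most a'^2 / 4. *)
have beta8 : beta ^+ 2 <= 8^-1 by rewrite beta_sqr; nra.
apply: le_trans (sqr_proj_le_of_flat beta0 beta8 vn vLam hflat hmin zLam yU zP) _.
by rewrite ler_wpM2r ?dotpp_ge0 // beta_sqr; nra.
Qed.
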